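(* Let $\Omega$ be the unit disk in $\mathbb{R}^2$ and $(x,v)\in\Omega\times\mathbb{R}^2$, and let $k\ge0$ be the number of reflections of the billiard trajectory starting at $x$ with velocity $v$. If $k\ge1$, let $(\cos\theta,\sin\theta)$ be the first reflection point, $A$ the angle between $v$ and the outward normal $(\cos\theta,\sin\theta)$ at that point, and $z_j=\big(\cos(\theta+j(\pi-2A)),\sin(\theta+j(\pi-2A))\big)$ for $j\in\mathbb Z$. Then $$\eta(x,v)=k\,(z_{k-1}-z_k)+R_{k(\pi-2A)}(x+v),$$ where $R_\alpha$ is the rotation matrix of angle $\alpha$; for $k=0$ this reads $\eta(x,v)=x+v$.
   Context: $\eta(x,v)$ is the endpoint of the billiard trajectory in $\Omega$ starting at $x$ with initial direction $v/|v|$, consisting of straight segments specularly reflected ($u\mapsto u-2(n\cdot u)n$, $n$ outward normal) at each boundary hit, stopped when its total length equals $|v|$. *)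

From Stdlib Require Import Reals.
Open Scope R_scope.

Definition pt := (R * R)%type.

Definition padd (p q : pt) : pt := (fst p + fst q, snd p + snd q).
Definition psub (p q : pt) : pt := (fst p - fst q, snd p - snd q).
Definition pscal (a : R) (p : pt) : pt := (a * fst p, a * snd p).
Definition pdot (p q : pt) : R := fst p * fst q + snd p * snd q.
Definition pnorm (p : pt) : R := sqrt (pdot p p).

Definition rot (alpha : R) (p : pt) : pt :=
  (cos alpha * fst p - sin alpha * snd p, sin alpha * fst p + cos alpha * snd p).

(* Specular reflection u |-> u - 2 (n.u) n ; for the unit disk the outward
   unit normal at a boundary point p is p itself. *)
Definition reflect (n u : pt) : pt := psub u (pscal (2 * pdot n u) n).

Fixpoint total_len (s : nat -> R) (k : nat) : R :=
  match k with
  | O => 0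
  | S k' => total_len s k' + s k
  end.

(* Billiard trajectory in the open unit disk Omega = {p | |p| < 1},
   starting at x with initial direction v/|v|, of total length |v|.
   q i (1 <= i <= k) are the successive boundary hit (reflection) points,
   q 0 = x; u i is the direction after the i-th reflection (u 0 = v/|v|);
   s i is the length of the straight segment from q (i-1) to q i, which stays
   in Omega before reaching the boundary; y is the endpoint, reached after
   travelling the remaining length |v| - (s 1 + ... + s k) along u k without
   hitting the boundary before the end.  k is the number of reflections. *)
Definition billiard_path (x v : pt) (k : nat) (q u : nat -> pt) (s : nat -> R)
    (y : pt) : Prop :=
  q O = x /\
  u O = pscal (/ pnorm v) v /\
  (forall i : nat, (1 <= i <= k)%nat ->
     0 < s i /\
     pnorm (q i) = 1 /\
     q i = padd (q (i - 1)%nat) (pscal (s i) (u (i - 1)%nat)) /\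
     (forall r, 0 < r < s i ->
        pnorm (padd (q (i - 1)%nat) (pscal r (u (i - 1)%nat))) < 1) /\
     u i = reflect (q i) (u (i - 1)%nat)) /\
  total_len s k <= pnorm v /\
  (forall r, 0 < r < pnorm v - total_len s k ->
     pnorm (padd (q k) (pscal r (u k))) < 1) /\
  y = padd (q k) (pscal (pnorm v - total_len s k) (u k)).

Definition zpt (theta A j : R) : pt :=
  (cos (theta + j * (PI - 2 * A)), sin (theta + j * (PI - 2 * A))).

(* Every chord of the unit circle meets the circle at the same angle at both ends,
   so all reflections happen with the same angle A: the hit points advance by the
   angle π - 2A along the circle, each inner chord has length 2 cos A, and each
   outgoing direction is the previous one rotated by π - 2A.  Hence rotating x + v,
   which equals z_0 + (|v| - s_1) u_0, by k(π - 2A) gives z_k + (|v| - s_1) u_k,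
   while the endpoint is z_{k-1} + (|v| - s_1 - (k-1) 2 cos A) u_k; the two differ
   by k (z_{k-1} - z_k), because z_{k-1} - z_k = -2 cos A u_k. *)

From Stdlib Require Import Reals Lra Lia Psatz.
Open Scope R_scope.

Definition cis (t : R) : pt := (cos t, sin t).

Lemma pdot_cis a b : pdot (cis a) (cis b) = cos (b - a).
Proof. unfold pdot, cis; simpl. rewrite cos_minus; ring. Qed.

Lemma pdot_cis_same a : pdot (cis a) (cis a) = 1.
Proof. rewrite pdot_cis, Rminus_diag; exact cos_0. Qed.

Lemma pnorm_eq1 p : pnorm p = 1 -> pdot p p = 1.
Proof.
  unfold pnorm; intros H.
  destruct (Rle_dec 0 (pdot p p)) as [Hp | Hp].
  - rewrite <- (sqrt_sqrt _ Hp), H; ring.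
  - rewrite sqrt_neg_0 in H; lra.
Qed.

Lemma pscal_pnorm_normalize v : pscal (pnorm v) (pscal (/ pnorm v) v) = v.
Proof.
  destruct v as [v1 v2]; unfold pscal; simpl.
  destruct (Req_dec (pnorm (v1, v2)) 0) as [H0 | H0].
  - unfold pnorm, pdot in H0; simpl in H0.
    apply sqrt_eq_0 in H0; [| nra].
    assert (v1 = 0) by nra; assert (v2 = 0) by nra; subst.
    f_equal; ring.
  - f_equal; field; exact H0.
Qed.

Lemma rot_cis g t : rot g (cis t) = cis (t + g).
Proof. unfold rot, cis; simpl. rewrite cos_plus, sin_plus. f_equal; ring. Qed.

Lemma rot_padd g a b : rot g (padd a b) = padd (rot g a) (rot g b).
Proof. destruct a, b; unfold rot, padd; simpl; f_equal; ring. Qed.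

Lemma rot_pscal g r a : rot g (pscal r a) = pscal r (rot g a).
Proof. destruct a; unfold rot, pscal; simpl; f_equal; ring. Qed.

Lemma reflect_cis p A : reflect (cis p) (cis (p + A)) = cis (p + (PI - 2 * A) + A).
Proof.
  unfold reflect. rewrite pdot_cis. replace (p + A - p) with A by ring.
  unfold psub, pscal, cis; simpl.
  replace (p + (PI - 2 * A) + A) with (p - A + PI) by ring.
  rewrite neg_cos, neg_sin, cos_plus, sin_plus, cos_minus, sin_minus.
  f_equal; ring.
Qed.

Lemma cis_chord p A :
  cis (p + (PI - 2 * A)) = padd (cis p) (pscal (2 * cos A) (cis (p + (PI - 2 * A) + A))).
Proof.
  replace (p + (PI - 2 * A) + A) with (p - A + PI) by ring.
  replace (p + (PI - 2 * A)) with (p - A - A + PI) by ring.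
  unfold padd, pscal, cis; simpl.
  rewrite !neg_cos, !neg_sin.
  set (w := p - A). replace p with (w + A) by (unfold w; ring).
  rewrite cos_plus, sin_plus, !cos_minus, !sin_minus.
  f_equal; ring.
Qed.

Lemma unit_chord_length (q w : pt) (s : R) :
  pdot q q = 1 -> pdot w w = 1 -> 0 < s -> pnorm (padd q (pscal s w)) = 1 ->
  s = - 2 * pdot q w.
Proof.
  intros Hq Hw Hs Hn; apply pnorm_eq1 in Hn.
  destruct q as [a b], w as [c d]; unfold pdot, padd, pscal in *; simpl in *.
  assert (Hprod : s * (s + 2 * (a * c + b * d)) = 0) by nra.
  apply Rmult_integral in Hprod; lra.
Qed.

Lemma circle_chord p A s :
  0 < s -> pnorm (padd (cis p) (pscal s (cis (p + (PI - 2 * A) + A)))) = 1 ->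
  s = 2 * cos A /\ padd (cis p) (pscal s (cis (p + (PI - 2 * A) + A))) = cis (p + (PI - 2 * A)).
Proof.
  intros Hs Hn.
  assert (HsA : s = 2 * cos A).
  { rewrite (unit_chord_length _ _ _ (pdot_cis_same _) (pdot_cis_same _) Hs Hn).
    rewrite pdot_cis. replace (p + (PI - 2 * A) + A - p) with (PI - A) by ring.
    rewrite Rtrigo_facts.cos_pi_minus; ring. }
  split; [exact HsA |]. rewrite HsA, cis_chord; reflexivity.
Qed.

Section BilliardPath.

Context {x v : pt} {k : nat} {q u : nat -> pt} {s : nat -> R} {y : pt}.
Hypothesis Hpath : billiard_path x v k q u s y.

Lemma billiard_path_endpoint : y = padd (q k) (pscal (pnorm v - total_len s k) (u k)).
Proof. destruct Hpath as (_ & _ & _ & _ & _ & Hy); exact Hy. Qed.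

Lemma billiard_path_no_reflection : k = O -> y = padd x v.
Proof.
  intros Hk0. destruct Hpath as (Hq0 & Hu0 & _ & _ & _ & Hy).
  subst k; rewrite Hy, Hq0, Hu0; simpl total_len.
  rewrite Rminus_0_r, pscal_pnorm_normalize; reflexivity.
Qed.

Lemma billiard_path_bounce i : (S i <= k)%nat ->
  0 < s (S i) /\ pnorm (q (S i)) = 1 /\
  q (S i) = padd (q i) (pscal (s (S i)) (u i)) /\ u (S i) = reflect (q (S i)) (u i).
Proof.
  intros Hi. destruct Hpath as (_ & _ & Hstep & _).
  destruct (Hstep (S i)) as (Hs & Hn & Hq & _ & Hu); [lia |].
  replace (S i - 1)%nat with i in Hq, Hu by lia.
  repeat split; assumption.
Qed.

Lemma billiard_path_start :
  (1 <= k)%nat -> padd x v = padd (q 1%nat) (pscal (pnorm v - s 1%nat) (u O)).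
Proof.
  intros Hk. destruct (billiard_path_bounce 0 Hk) as (_ & _ & Hq1 & _).
  destruct Hpath as (Hq0 & Hu0 & _).
  rewrite Hq1, Hq0, <- (pscal_pnorm_normalize v) at 1.
  rewrite <- Hu0. destruct x, (u O); unfold padd, pscal; simpl; f_equal; ring.
Qed.

Context {theta A : R}.
Hypothesis Hq1 : q 1%nat = cis theta.
Hypothesis Hu0 : u O = cis (theta + A).

Lemma billiard_path_reflections n : (S n <= k)%nat ->
  q (S n) = cis (theta + INR n * (PI - 2 * A)) /\
  u (S n) = cis (theta + INR (S n) * (PI - 2 * A) + A) /\
  total_len s (S n) = s 1%nat + INR n * (2 * cos A).
Proof.
  induction n as [| n IH]; intros Hn.
  - destruct (billiard_path_bounce 0 Hn) as (_ & _ & _ & Hu1).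
    rewrite Hu1, Hq1, Hu0, reflect_cis. simpl total_len; simpl INR.
    repeat split; [f_equal | f_equal | ]; ring.
  - destruct IH as (Hq & Hu & Hlen); [lia |].
    destruct (billiard_path_bounce (S n) Hn) as (Hs & Hnorm & Hqn & Hun).
    set (p := theta + INR n * (PI - 2 * A)) in Hq.
    replace (theta + INR (S n) * (PI - 2 * A) + A) with (p + (PI - 2 * A) + A)
      in Hu by (unfold p; rewrite S_INR; ring).
    rewrite Hq, Hu in Hqn. rewrite Hqn in Hnorm.
    destruct (circle_chord _ _ _ Hs Hnorm) as [HsA Hhit].
    rewrite Hhit in Hqn.
    rewrite Hun, Hqn, Hu, reflect_cis.
    change (total_len s (S (S n))) with (total_len s (S n) + s (S (S n))).
    rewrite Hlen, HsA. unfold p; rewrite !S_INR.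
    repeat split; [f_equal | f_equal | ]; ring.
Qed.

End BilliardPath.

Lemma endpoint_formula theta A m L s1 :
  padd (cis (theta + m * (PI - 2 * A)))
       (pscal (L - (s1 + m * (2 * cos A))) (cis (theta + (m + 1) * (PI - 2 * A) + A))) =
  padd (pscal (m + 1) (psub (zpt theta A m) (zpt theta A (m + 1))))
       (rot ((m + 1) * (PI - 2 * A)) (padd (cis theta) (pscal (L - s1) (cis (theta + A))))).
Proof.
  rewrite rot_padd, rot_pscal, !rot_cis.
  set (p := theta + m * (PI - 2 * A)).
  replace (theta + (m + 1) * (PI - 2 * A)) with (p + (PI - 2 * A)) by (unfold p; ring).
  replace (theta + A + (m + 1) * (PI - 2 * A)) with (p + (PI - 2 * A) + A) by (unfold p; ring).
  unfold zpt. fold p.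
  replace (theta + (m + 1) * (PI - 2 * A)) with (p + (PI - 2 * A)) by (unfold p; ring).
  change (cos (p + (PI - 2 * A)), sin (p + (PI - 2 * A))) with (cis (p + (PI - 2 * A))).
  change (cos p, sin p) with (cis p).
  rewrite cis_chord.
  unfold padd, pscal, psub, cis; simpl; f_equal; ring.
Qed.

Theorem propositionA1 (x v : pt) (k : nat) (q u : nat -> pt) (s : nat -> R)
    (y : pt) :
  pnorm x < 1 ->
  billiard_path x v k q u s y ->
  (k = O -> y = padd x v) /\
  ((1 <= k)%nat ->
   forall theta A : R,
     q 1%nat = (cos theta, sin theta) ->
     u O = (cos (theta + A), sin (theta + A)) ->
     y = padd (pscal (INR k) (psub (zpt theta A (INR k - 1)) (zpt theta A (INR k))))
              (rot (INR k * (PI - 2 * A)) (padd x v))).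
Proof.
  intros _ Hpath. split; [exact (billiard_path_no_reflection Hpath) |].
  intros Hk theta A Hq1 Hu0.
  destruct k as [| m]; [lia |].
  destruct (billiard_path_reflections Hpath Hq1 Hu0 m (le_n _)) as (Hqk & Huk & Hlen).
  rewrite (billiard_path_endpoint Hpath), (billiard_path_start Hpath Hk).
  rewrite Hqk, Huk, Hlen, Hq1, Hu0, S_INR.
  replace (INR m + 1 - 1) with (INR m) by ring.
  apply endpoint_formula.
Qed.
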